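(* Let $A=k_{-1}[x_1,\dots,x_n]$ (i.e. $p_{ij}=-1$ for all $i\neq j$), and let $G$ be a finite subgroup of $\mathrm{Aut}(A)$ generated by quasi-reflections such that $[n]$ is a circle for $G$ and $\tau_{i,j,1}\in G$ for all $i\ne j$. Define $\Theta_i=\{\lambda\in k^\times:\theta_{i,\lambda}\in G\}$, $T_{i,j}=\{\lambda\in k^\times:\tau_{i,j,\lambda}\in G\}$, $S_{i,j}=\{\lambda\in k^\times: s_{i,j,\lambda}\in G\}$. Then: (a) $\Theta_i=\Theta_j$ for all $i,j$, and $\Theta_i$ is a cyclic group of some order $\alpha$; (b) $S_{i,j}=S_{i',j'}$ for all pairs $i\ne j$, $i'\ne j'$, and $S_{i,j}$ is cyclic of some even order $\beta$; (c) $T_{i,j}=T_{i',j'}=S_{i,j}$ for all such pairs; (d) $\alpha$ divides $\beta$.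
   Context: $k$ is algebraically closed of characteristic zero, $n\ge2$, $[n]=\{1,\dots,n\}$. $A=k_{-1}[x_1,\dots,x_n]$ is the graded $k$-algebra generated by $x_1,\dots,x_n$ (degree 1) with $x_jx_i=-x_ix_j$ for $i\ne j$. $\mathrm{Aut}(A)$: graded algebra automorphisms; $g$ is a quasi-reflection if $\sum_i\mathrm{tr}(g|_{A_i})t^i=\frac1{(1-t)^{n-1}(1-\lambda t)}$ with $\lambda\ne1$. For $s\in[n]$, $\lambda\in k^\times$: $\theta_{s,\lambda}(x_s)=\lambda x_s$, $\theta_{s,\lambda}(x_i)=x_i$ ($i\ne s$). For $s\ne t$, $\lambda\in k^\times$: $\tau_{s,t,\lambda}(x_s)=\lambda x_t$, $\tau_{s,t,\lambda}(x_t)=-\lambda^{-1}x_s$, $\tau_{s,t,\lambda}(x_i)=x_i$ otherwise; $s_{s,t,\lambda}(x_s)=\lambda x_s$, $s_{s,t,\lambda}(x_t)=\lambda^{-1}x_t$, $s_{s,t,\lambda}(x_i)=x_i$ otherwise. $[n]$ is a circle for $G$ if for each pair of distinct $i,j$ there are $\tau_{i_s,j_s,\lambda_s}\in G$, $s=0,\dots,t$, with $i_0=i$, $i_{s+1}=j_s$, $j_t=j$. *)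

From HB Require Import structures.
From mathcomp Require Import all_boot all_order all_algebra.
Set Implicit Arguments. Unset Strict Implicit. Unset Printing Implicit Defensive.
Import Order.TTheory GRing.Theory Num.Theory.
Local Open Scope ring_scope.

(* A graded endomorphism g of A is
   determined by its degree-1 part, encoded as a matrix M with
   g(x_j) = \sum_i M i j x_i  (column convention; composition = *m).       *)

Section Defs.
Variable R : fieldType.
Variable n : nat.

(* ordered monomials of degree d : x_{c_1} ... x_{c_d}, c_1 <= ... <= c_d;
   they form the standard basis of A_d *)
Definition mon (d : nat) := {c : d.-tuple 'I_n | sorted (fun a b : 'I_n => (a <= b)%N) c}.

(* number of inversions of a word; x_{w_1}...x_{w_d} = (-1)^inv w x_{sort w} *)
Definition inv_word (d : nat) (w : d.-tuple 'I_n) : nat :=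
  \sum_(p < d) \sum_(q < d) ((p < q)%N && (tnth w q < tnth w p)%N).

(* coefficient of the ordered monomial x_c in  g(x_{u_1}) ... g(x_{u_d}) *)
Definition prod_coef (M : 'M[R]_n) (d : nat) (c : mon d) (u : d.-tuple 'I_n) : R :=
  \sum_(w : d.-tuple 'I_n | sort (fun a b : 'I_n => (a <= b)%N) w == val c)
     (-1) ^+ inv_word w * \prod_(k < d) M (tnth w k) (tnth u k).

(* M defines a graded algebra endomorphism of A: the defining relations
   x_i x_j + x_j x_i (i != j) are sent to 0 in A_2 *)
Definition preserves_rel (M : 'M[R]_n) : Prop :=
  forall i j : 'I_n, i != j -> forall c : mon 2,
    prod_coef M c [tuple i; j] + prod_coef M c [tuple j; i] = 0.

Definition is_graut (M : 'M[R]_n) : Prop := M \in unitmx /\ preserves_rel M.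

Definition trace_deg (M : 'M[R]_n) (d : nat) : R :=
  \sum_(m : mon d) prod_coef M m (val m).

(* g is a quasi-reflection: its trace series equals
   1/((1-t)^(n-1)(1-lambda t)) with lambda != 1, written coefficientwise:
   the coefficient of t^d of the right side is
   \sum_{j=0}^d lambda^j * binom(d-j+n-2, n-2). *)
Definition quasi_reflection (M : 'M[R]_n) : Prop :=
  exists lam : R, lam != 1 /\
    forall d : nat, trace_deg M d =
      \sum_(j < d.+1) lam ^+ j * ('C((d - j) + (n - 2), n - 2))%:R.

Definition theta (s : 'I_n) (lam : R) : 'M[R]_n :=
  \matrix_(a, b) (if a == b then (if a == s then lam else 1) else 0).

Definition tau (s t : 'I_n) (lam : R) : 'M[R]_n :=
  \matrix_(a, b)
    (if b == s then (if a == t then lam else 0)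
     else if b == t then (if a == s then - lam^-1 else 0)
     else (a == b)%:R).

Definition sdiag (s t : 'I_n) (lam : R) : 'M[R]_n :=
  \matrix_(a, b)
    (if a == b then (if a == s then lam else if a == t then lam^-1 else 1)
     else 0).

Definition fin_subgroup_Aut (G : seq 'M[R]_n) : Prop :=
  [/\ 1%:M \in G,
      (forall g h, g \in G -> h \in G -> g *m h \in G),
      (forall g, g \in G -> invmx g \in G) &
      (forall g, g \in G -> is_graut g)].

Definition gen_by_qr (G : seq 'M[R]_n) : Prop :=
  forall g, g \in G -> exists s : seq 'M[R]_n,
    (forall h, h \in s -> h \in G /\ (quasi_reflection h \/ quasi_reflection (invmx h)))
    /\ g = foldr (@mulmx R n n n) 1%:M s.

Fixpoint tau_chain (G : seq 'M[R]_n) (i j : 'I_n) (l : seq ('I_n * 'I_n * R)) : Prop :=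
  match l with
  | [::] => False
  | (a, b, lam) :: l' =>
      [/\ a = i, a != b, tau a b lam \in G &
          match l' with [::] => b = j | _ => tau_chain G b j l' end]
  end.

Definition is_circle (G : seq 'M[R]_n) : Prop :=
  forall i j : 'I_n, i != j -> exists l, tau_chain G i j l.

Definition Theta (G : seq 'M[R]_n) (i : 'I_n) : pred R :=
  fun lam => (lam != 0) && (theta i lam \in G).
Definition Tset (G : seq 'M[R]_n) (i j : 'I_n) : pred R :=
  fun lam => (lam != 0) && (tau i j lam \in G).
Definition Sset (G : seq 'M[R]_n) (i j : 'I_n) : pred R :=
  fun lam => (lam != 0) && (sdiag i j lam \in G).

Definition cyclic_of_order (P : pred R) (a : nat) : Prop :=
  exists z : R, a.-primitive_root z /\ forall x, P x <-> exists m : nat, x = z ^+ m.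

End Defs.

From HB Require Import structures.
From mathcomp Require Import all_boot all_order all_algebra.
From mathcomp Require Import cyclic.
Set Implicit Arguments. Unset Strict Implicit. Unset Printing Implicit Defensive.
Import Order.TTheory GRing.Theory Num.Theory.
Local Open Scope ring_scope.

(* Proof of Lemma 4.2.  The factorisations
     tau_{i,j,lam} = s_{j,i,lam} tau_{i,j,1} give (c).
   - Theta_i and S_{i,j} are finite subgroups of k^x (read off a diagonal
     entry of the finitely many elements of G), hence cyclic.
   - S_{i,j} contains -1 = s_{i,j,-1} = tau_{i,j,1}^2, so beta is even, and
     S_{i,j} contains Theta_i since s_{i,j,lam} = theta_{i,lam} theta_{j,lam^-1};
     hence alpha divides beta. *)

Section FiniteMulGroup.
Variables (F : fieldType) (P : pred F).
Hypotheses (P1 : P 1) (PM : forall x y, P x -> P y -> P (x * y))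
           (P0 : forall x, P x -> x != 0).

Lemma mulclosed_exp x m : P x -> P (x ^+ m).
Proof.
by move=> Px; elim: m => [|m IH]; rewrite ?expr0 // exprS; apply: PM.
Qed.

(* Lagrange in the abelian case: multiplication by x permutes an enumeration
   s of P, so comparing products gives x ^+ size s = 1. *)
Lemma enum_exp_size (s : seq F) : uniq s -> (forall x, (x \in s) = P x) ->
  forall x, P x -> x ^+ size s = 1.
Proof.
move=> Us sP x Px; set xs := map (fun y => x * y) s.
have perm_xs : perm_eq xs s.
  have Uxs : uniq xs by rewrite map_inj_uniq //; apply/mulfI/P0.
  have sub_xs : {subset xs <= s}.
    by move=> _ /mapP [y ys ->]; rewrite sP PM // -sP.
  have [_ xs_eq_s] := uniq_min_size Uxs sub_xs (eq_leq (esym (size_map _ _))).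
  exact: uniq_perm Uxs Us xs_eq_s.
have prod_nz : \prod_(y <- s) y != 0.
  by rewrite prodf_seq_neq0; apply/allP => y; rewrite sP => /P0.
apply: (mulIf prod_nz); rewrite mul1r -{2}(perm_big _ perm_xs) /= big_map.
by rewrite big_split /= big_const_seq count_predT iter_mulr_1.
Qed.

Lemma finite_mulgroup_cyclic (s0 : seq F) : (forall x, P x -> x \in s0) ->
  exists N, cyclic_of_order P N.
Proof.
move=> Ps0; set s := undup (filter P s0).
have sP x : (x \in s) = P x.
  by rewrite mem_undup mem_filter andb_idr //; apply: Ps0.
have N_gt0 : (0 < size s)%N by rewrite -has_predT; apply/hasP; exists 1; rewrite ?sP.
have roots : all (size s).-unity_root s.
  by apply/allP => y; rewrite sP unity_rootE => /(enum_exp_size (undup_uniq _) sP) ->.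
have /hasP [z z_s z_prim] := has_prim_root N_gt0 roots (undup_uniq _) (leqnn _).
exists (size s), z; split => // x; split.
  by move=> /(enum_exp_size (undup_uniq _) sP) /(prim_rootP z_prim) [i ->]; exists i.
by case=> m ->; apply: mulclosed_exp; rewrite -sP.
Qed.

End FiniteMulGroup.

Section CyclicOfOrder.
Variables (F : fieldType) (P : pred F) (a : nat).
Hypothesis P_cyclic : cyclic_of_order P a.

Lemma cyclic_of_order_eq (Q : pred F) : P =1 Q -> cyclic_of_order Q a.
Proof.
by case: P_cyclic => z [z_prim Pz] PQ; exists z; split=> // x; rewrite -PQ.
Qed.

Lemma cyclic_exp_order x : P x -> x ^+ a = 1.
Proof.
case: P_cyclic => z [z_prim Pz] /Pz [m ->].
by rewrite -exprM mulnC exprM (prim_expr_order z_prim) expr1n.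
Qed.

Lemma cyclic_order_even : P (-1) -> (-1 : F) != 1 -> ~~ odd a.
Proof.
move=> /cyclic_exp_order m1a; apply: contraNN => odd_a.
by rewrite -[X in _ == X]m1a -signr_odd odd_a expr1.
Qed.

(* A cyclic set is closed under inversion: x^-1 = x ^+ a.-1. *)
Lemma cyclic_inv x : P x -> P x^-1.
Proof.
case: (P_cyclic) => z [z_prim Pz] Px.
have a_gt0 := prim_order_gt0 z_prim.
have xa : x * x ^+ a.-1 = 1 by rewrite -exprS prednK // cyclic_exp_order.
have x_nz : x != 0 by apply: contra_eq_neq xa => ->; rewrite mul0r eq_sym oner_eq0.
rewrite -[x^-1]mulr1 -xa mulKf //.
by have [m ->] := (Pz x).1 Px; apply/Pz; exists (m * a.-1)%N; rewrite exprM.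
Qed.

End CyclicOfOrder.

Lemma cyclic_order_dvd (F : fieldType) (P Q : pred F) (a b : nat) :
  cyclic_of_order P a -> cyclic_of_order Q b ->
  (forall x, P x -> Q x) -> (a %| b)%N.
Proof.
case=> z [z_prim Pz] Q_cyclic PQ.
have Qz : Q z by apply/PQ/Pz; exists 1%N; rewrite expr1.
by rewrite (prim_order_dvd z_prim) (cyclic_exp_order Q_cyclic Qz).
Qed.

(* The generators
   theta, s and tau are monomial, and products of monomial matrices are
   computed pointwise, so the relations among the generators reduce to
   identities in F. *)
Section Monomial.
Variables (F : fieldType) (n : nat).
Implicit Types (i j : 'I_n) (lam : F).

Definition mono (f : 'I_n -> 'I_n) (c : 'I_n -> F) : 'M[F]_n :=
  \matrix_(a, b) (if a == f b then c b else 0).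

Lemma mono_mul f1 c1 f2 c2 :
  mono f1 c1 *m mono f2 c2 = mono (f1 \o f2) (fun b => c1 (f2 b) * c2 b).
Proof.
apply/matrixP => a b; rewrite !mxE (bigD1 (f2 b)) //= big1.
  by rewrite !mxE eqxx addr0; case: ifP; rewrite ?mul0r.
by move=> x /negbTE xb; rewrite !mxE xb mulr0.
Qed.

Lemma mono_eq f c f' c' : f =1 f' -> c =1 c' -> mono f c = mono f' c'.
Proof. by move=> ef ec; apply/matrixP => a b; rewrite !mxE ef ec. Qed.

Definition swap_idx (s t b : 'I_n) : 'I_n :=
  if b == s then t else if b == t then s else b.

Lemma thetaE i lam : theta i lam = mono id (fun b => if b == i then lam else 1).
Proof. by apply/matrixP => a b; rewrite !mxE; case: eqP => // ->. Qed.

Lemma sdiagE i j lam : sdiag i j lam =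
  mono id (fun b => if b == i then lam else if b == j then lam^-1 else 1).
Proof. by apply/matrixP => a b; rewrite !mxE; case: eqP => // ->. Qed.

Lemma tauE i j lam : tau i j lam =
  mono (swap_idx i j) (fun b => if b == i then lam else if b == j then - lam^-1 else 1).
Proof.
apply/matrixP => a b; rewrite !mxE /swap_idx.
by case: (b =P i) => // _; case: (b =P j) => // _; case: (a =P b).
Qed.

End Monomial.

(* Decides an identity between products of monomial generators: compare the
   permutations and the scalars at each basis index b, by cases on b. *)
Ltac decide_idx :=
  repeat match goal with
  | H : is_true (?x != ?x) |- _ => by rewrite eqxx in H
  | |- context [?x == ?x] => rewrite eqxx /=
  | H : is_true (?x != ?y) |- context [?x == ?y] => rewrite (negbTE H) /=
  | H : is_true (?x != ?y) |- context [?y == ?x] => rewrite [y == x]eq_sym (negbTE H) /=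
  end.

Ltac mono_identity :=
  rewrite ?thetaE ?sdiagE ?tauE !mono_mul; apply: mono_eq => ? /=; rewrite /swap_idx;
  repeat (match goal with |- context [?x == ?y] =>
            is_var x; is_var y; case: (eqVneq x y) => [?|?]; [subst|] end; decide_idx);
  rewrite ?(invr1, invrN, mulr1, mul1r, mulrN1, mulN1r, mulrN, mulNr, opprK, invrK) //.

Section GeneratorRelations.
Variables (F : fieldType) (n : nat).
Implicit Types (i j l : 'I_n) (lam : F).

(* conjugation by tau_{i,j,1} (with inverse tau_{j,i,1}) moves theta_i to theta_j *)
Lemma theta_conj i j lam : i != j ->
  theta j lam = tau i j 1 *m theta i lam *m tau j i 1.
Proof. move=> ij; mono_identity. Qed.

Lemma sdiag_conj_swap i j lam : i != j ->
  sdiag j i lam = tau i j 1 *m sdiag i j lam *m tau j i 1.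
Proof. move=> ij; mono_identity. Qed.

Lemma sdiag_conj_move i j l lam : i != j -> l != i -> l != j ->
  sdiag i l lam = tau j l 1 *m sdiag i j lam *m tau l j 1.
Proof. move=> ij li lj; mono_identity. Qed.

Lemma tau_factor i j lam : i != j -> tau i j lam = sdiag j i lam *m tau i j 1.
Proof. move=> ij; mono_identity. Qed.

Lemma sdiag_tau_quot i j lam : i != j -> sdiag j i lam = tau i j lam *m tau j i 1.
Proof. move=> ij; mono_identity. Qed.

Lemma sdiagN1 i j : i != j -> sdiag i j (-1 : F) = tau i j 1 *m tau i j 1.
Proof. move=> ij; mono_identity. Qed.

Lemma sdiag_theta i j lam : i != j -> sdiag i j lam = theta i lam *m theta j lam^-1.
Proof. move=> ij; mono_identity. Qed.

End GeneratorRelations.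

Section DiagonalFamilies.
Variables (F : fieldType) (n : nat).
Implicit Types (i j : 'I_n) (x y : F).

Lemma theta1 i : theta i (1 : F) = 1%:M.
Proof. by apply/matrixP => a b; rewrite !mxE; case: eqP => // ->; case: ifP. Qed.

Lemma sdiag1 i j : sdiag i j (1 : F) = 1%:M.
Proof.
by apply/matrixP => a b; rewrite !mxE invr1; case: eqP => // ->; case: ifP => //; case: ifP.
Qed.

Lemma thetaM i x y : theta i x *m theta i y = theta i (x * y).
Proof. mono_identity. Qed.

Lemma sdiagM i j x y : sdiag i j x *m sdiag i j y = sdiag i j (x * y).
Proof. by mono_identity; rewrite invfM. Qed.

Lemma theta_diag i x : theta i x i i = x.
Proof. by rewrite mxE !eqxx. Qed.

Lemma sdiag_diag i j x : sdiag i j x i i = x.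
Proof. by rewrite mxE !eqxx. Qed.

End DiagonalFamilies.

Section ParameterSets.
Variables (F : fieldType) (n : nat) (G : seq 'M[F]_n).
Hypotheses (G1 : 1%:M \in G)
           (GM : forall g h, g \in G -> h \in G -> g *m h \in G)
           (Gtau1 : forall i j : 'I_n, i != j -> tau i j 1 \in G).
Implicit Types (i j l : 'I_n) (x : F).

Lemma conj_tau_mem i j g : i != j -> g \in G -> tau i j 1 *m g *m tau j i 1 \in G.
Proof. by move=> ij Gg; rewrite !GM ?Gtau1 // eq_sym. Qed.

Lemma Theta_transfer i j : Theta G i =1 Theta G j.
Proof.
suff Theta_sub i' j' x : Theta G i' x -> Theta G j' x.
  by move=> x; apply/idP/idP; apply: Theta_sub.
have [-> // | ij] := eqVneq i' j'.
by case/andP=> x_nz Gx; rewrite /Theta x_nz (theta_conj _ ij) conj_tau_mem.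
Qed.

(* S_{i,j} = S_{j,i} and S_{i,j} = S_{i,l}: the two moves that connect any
   two ordered pairs of distinct indices. *)
Lemma Sset_swap i j x : i != j -> Sset G i j x -> Sset G j i x.
Proof.
by move=> ij /andP [x_nz Gx]; rewrite /Sset x_nz (sdiag_conj_swap _ ij) conj_tau_mem.
Qed.

Lemma Sset_move i j l x : i != j -> l != i -> Sset G i j x -> Sset G i l x.
Proof.
move=> ij li; have [-> // | lj] := eqVneq l j.
case/andP=> x_nz Gx; rewrite /Sset x_nz (sdiag_conj_move _ ij li lj).
by rewrite conj_tau_mem // eq_sym.
Qed.

Lemma Sset_transfer i j i' j' : i != j -> i' != j' -> Sset G i j =1 Sset G i' j'.
Proof.
suff Sset_sub i1 j1 i2 j2 x : i1 != j1 -> i2 != j2 -> Sset G i1 j1 x -> Sset G i2 j2 x.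
  by move=> ij ij' x; apply/idP/idP; apply: Sset_sub.
have [<- | i12] := eqVneq i1 i2 => ij1 ij2 S1.
  by apply: (Sset_move ij1 _ S1); rewrite eq_sym.
have S12 : Sset G i1 i2 x by apply: (Sset_move ij1 _ S1); rewrite eq_sym.
by apply: (Sset_move _ _ (Sset_swap i12 S12)); rewrite eq_sym.
Qed.

Lemma Tset_Sset i j : i != j -> Tset G i j =1 Sset G i j.
Proof.
move=> ij x; have ji : j != i by rewrite eq_sym.
apply/idP/idP => /andP [x_nz Gx].
  by rewrite -(Sset_transfer ji ij) /Sset x_nz (sdiag_tau_quot _ ij) GM ?Gtau1.
have /andP [_ Gs] : Sset G j i x by rewrite (Sset_transfer ji ij) /Sset x_nz.
by rewrite /Tset x_nz (tau_factor _ ij) GM ?Gtau1.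
Qed.

(* -1 \in S_{i,j}, since s_{i,j,-1} = tau_{i,j,1}^2 *)
Lemma Sset_neg1 i j : i != j -> Sset G i j (-1).
Proof. by move=> ij; rewrite /Sset oppr_eq0 oner_eq0 (sdiagN1 F ij) GM ?Gtau1. Qed.

Lemma Theta_Sset i j x : i != j -> Theta G i x -> Theta G j x^-1 -> Sset G i j x.
Proof.
by move=> ij /andP [x_nz Gx] /andP [_ Gxi]; rewrite /Sset x_nz (sdiag_theta _ ij) GM.
Qed.

Lemma param_set_cyclic (D : F -> 'M[F]_n) (a : 'I_n) :
  D 1 = 1%:M -> (forall x y, D x *m D y = D (x * y)) -> (forall x, D x a a = x) ->
  exists N, cyclic_of_order (fun x => (x != 0) && (D x \in G)) N.
Proof.
move=> D1 DM Daa.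
apply: (@finite_mulgroup_cyclic _ _ _ _ _ [seq (g : 'M[F]_n) a a | g <- G]).
- by rewrite oner_eq0 D1.
- move=> x y /andP [x_nz Gx] /andP [y_nz Gy].
  by rewrite mulf_neq0 // -DM GM.
- by move=> x /andP [].
- by move=> x /andP [_ Gx]; apply/mapP; exists (D x); rewrite ?Daa.
Qed.

End ParameterSets.

Lemma char0_neg1_neq1 (F : idomainType) : [pchar F] =i pred0 -> (-1 : F) != 1.
Proof.
move=> /pcharf0P char0; rewrite -subr_eq0 -opprD oppr_eq0.
by rewrite -(natrD _ 1 1) char0.
Qed.

Theorem lemma4p2 (k : closedFieldType) (hchar : [pchar k] =i pred0)
  (n : nat) (hn : (2 <= n)%N) (G : seq 'M[k]_n)
  (hG : fin_subgroup_Aut G) (hgen : gen_by_qr G) (hcirc : is_circle G)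
  (htau1 : forall i j : 'I_n, i != j -> tau i j 1 \in G) :
  [/\ (forall i j : 'I_n, Theta G i =1 Theta G j),
      (forall i j i' j' : 'I_n, i != j -> i' != j' -> Sset G i j =1 Sset G i' j'),
      (forall i j i' j' : 'I_n, i != j -> i' != j' ->
          Tset G i j =1 Tset G i' j' /\ Tset G i j =1 Sset G i j) &
      exists alpha beta : nat,
        [/\ forall i : 'I_n, cyclic_of_order (Theta G i) alpha,
            forall i j : 'I_n, i != j -> cyclic_of_order (Sset G i j) beta,
            ~~ odd beta &
            (alpha %| beta)%N]].
Proof.
case: hG => G1 GM _ _.
pose i0 : 'I_n := Ordinal (leq_trans (isT : (0 < 2)%N) hn).
pose j0 : 'I_n := Ordinal (leq_trans (isT : (1 < 2)%N) hn).
have ij0 : i0 != j0 by [].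
have [alpha Theta_cyc] := param_set_cyclic G1 GM (theta1 k i0) (@thetaM k n i0) (theta_diag i0).
have [beta S_cyc] :=
  param_set_cyclic G1 GM (sdiag1 k i0 j0) (@sdiagM k n i0 j0) (sdiag_diag i0 j0).
split.
- exact: Theta_transfer.
- exact: Sset_transfer.
- move=> i j i' j' ij ij'; split=> x; last exact: Tset_Sset.
  by rewrite !Tset_Sset //; apply: Sset_transfer.
exists alpha, beta; split.
- by move=> i; apply: (cyclic_of_order_eq Theta_cyc); apply: Theta_transfer.
- by move=> i j ij; apply: (cyclic_of_order_eq S_cyc); apply: Sset_transfer.
- exact: cyclic_order_even S_cyc (Sset_neg1 GM htau1 ij0) (char0_neg1_neq1 hchar).
(* Theta_i is contained in S_{i,j}, as theta_{i,x} theta_{j,x^-1} = s_{i,j,x} *)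
apply: (cyclic_order_dvd Theta_cyc S_cyc) => x Tx.
apply: (Theta_Sset GM ij0 Tx); rewrite -(Theta_transfer GM htau1 i0).
exact: (cyclic_inv Theta_cyc Tx).
Qed.
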